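(* An affine system $(X,\kappa,A)$ in $\mathbf{Sys}(L)$ is $T_0$ if and only if there exist a set $I$ and an embedding $(X,\kappa,A)\to\mathsf{S}^I$ in $\mathbf{Sys}(L)$, where $\mathsf{S}^I$ is the $I$-fold power of the Sierpinski affine system $\mathsf{S}$.
   Context: Fix a variety $\mathbf{A}$ of algebras, i.e. a full subcategory of the category of $\Omega$-algebras (sets equipped with a family of primitive operations of prescribed arities) and their homomorphisms, closed under products, subalgebras and homomorphic images. Assume $\mathbf{A}$ has all set-indexed coproducts $(A_i\xrightarrow{\mu_i}\coprod_{i}A_i)_i$, and that there is a free $\mathbf{A}$-algebra $S$ over a singleton $\{*\}$ with universal map $\eta:\{*\}\to|S|$. For an algebra $A$ and $a\in A$, let $\overline{a}^A:S\to A$ be the unique homomorphism with $\overline{a}^A(\eta( * ))=a$. Fix an $\mathbf{A}$-algebra $L$; for a set $X$, $L^X$ is the power algebra with pointwise operations. An affine system is a triple $(X,\kappa,A)$ with $X$ a set, $A$ an $\mathbf{A}$-algebra and $\kappa:A\to L^X$ a homomorphism. A morphism $(f,\varphi):(X_1,\kappa_1,A_1)\to(X_2,\kappa_2,A_2)$ is a pair of a map $f:X_1\to X_2$ and a homomorphism $\varphi:A_2\to A_1$ such that $\kappa_1(\varphi(a))(x)=\kappa_2(a)(f(x))$ for all $a\in A_2$, $x\in X_1$; composition is $(g,\psi)\circ(f,\varphi)=(g\circ f,\varphi\circ\psi)$. This is the category $\mathbf{Sys}(L)$, concrete over $\mathbf{Set}\times\mathbf{A}^{op}$ via $(X,\kappa,A)\mapsto(X,A)$.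 A morphism $(f,\varphi)$ is initial if for every system $(Y,\sigma,B)$ and every pair $(g,\psi)$ of a map $g:Y\to X_1$ and a homomorphism $\psi:A_1\to B$ such that $(f\circ g,\psi\circ\varphi)$ is a morphism $(Y,\sigma,B)\to(X_2,\kappa_2,A_2)$, the pair $(g,\psi)$ is a morphism $(Y,\sigma,B)\to(X_1,\kappa_1,A_1)$. An embedding is an initial morphism $(f,\varphi)$ with $f$ injective and $\varphi$ an epimorphism in $\mathbf{A}$. A system $(X,\kappa,A)$ is $T_0$ if for all $x,y\in X$, $\kappa(a)(x)=\kappa(a)(y)$ for all $a\in A$ implies $x=y$. The Sierpinski affine system is $\mathsf{S}=(|L|,\kappa_S,S)$, where $\kappa_S:S\to L^{|L|}$ is the unique homomorphism with $\kappa_S(s)(a)=\overline{a}^L(s)$ for $s\in S$, $a\in L$ (equivalently $\kappa_S(\eta( * ))=\mathrm{id}_L$). Products in $\mathbf{Sys}(L)$ of a family $(X_i,\kappa_i,A_i)_{i\in I}$ are $(\prod_iX_i,\kappa,\coprod_iA_i)$ with projections $(\pi_i,\mu_i)$, where $\kappa$ is the unique homomorphism with $\kappa(\mu_i(a))(x)=\kappa_i(a)(x_i)$; in particular $\mathsf{S}^I=(|L|^I,\theta,\coprod_{I}S)$ with $\theta(\mu_i(s))(x)=\kappa_S(s)(x_i)$. *)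

Set Implicit Arguments.
Unset Strict Implicit.

Section UA.
Variable Omega : Type.
Variable ar : Omega -> Type.

Record alg := Alg { car :> Type; op : forall o : Omega, (ar o -> car) -> car }.
Arguments op a o _ : clear implicits.

Definition is_hom (A B : alg) (f : A -> B) : Prop :=
  forall (o : Omega) (x : ar o -> A), f (op A o x) = op B o (fun k => f (x k)).

Definition prod_alg (I : Type) (F : I -> alg) : alg :=
  @Alg (forall i, F i) (fun o x i => op (F i) o (fun k => x k i)).

Definition pow_alg (X : Type) (A : alg) : alg := @prod_alg X (fun _ => A).

Definition op_closed (A : alg) (P : A -> Prop) : Prop :=
  forall (o : Omega) (x : ar o -> A), (forall k, P (x k)) -> P (op A o x).

Definition sub_alg (A : alg) (P : A -> Prop) (cP : op_closed P) : alg :=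
  @Alg {a : A | P a}
    (fun o x => exist P (op A o (fun k => proj1_sig (x k)))
                        (cP o _ (fun k => proj2_sig (x k)))).

Definition is_variety (V : alg -> Prop) : Prop :=
  (forall (I : Type) (F : I -> alg), (forall i, V (F i)) -> V (prod_alg F)) /\
  (forall (A : alg) (P : A -> Prop) (cP : op_closed P), V A -> V (sub_alg cP)) /\
  (forall (A B : alg) (f : A -> B), V A -> is_hom f ->
       (forall b : B, exists a, f a = b) -> V B).

Definition is_epi (V : alg -> Prop) (A B : alg) (f : A -> B) : Prop :=
  forall (C : alg), V C -> forall g h : B -> C, is_hom g -> is_hom h ->
    (forall a, g (f a) = h (f a)) -> forall b, g b = h b.

Definition is_coproduct (V : alg -> Prop) (I : Type) (F : I -> alg)
    (C : alg) (mu : forall i, F i -> C) : Prop :=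
  V C /\ (forall i, is_hom (mu i)) /\
  forall (B : alg), V B -> forall (g : forall i, F i -> B),
    (forall i, is_hom (g i)) ->
    exists h : C -> B, is_hom h /\ (forall i a, h (mu i a) = g i a) /\
      forall h' : C -> B, is_hom h' -> (forall i a, h' (mu i a) = g i a) ->
        forall c, h' c = h c.

Definition has_coproducts (V : alg -> Prop) : Prop :=
  forall (I : Type) (F : I -> alg), (forall i, V (F i)) ->
    exists (C : alg) (mu : forall i, F i -> C), @is_coproduct V I F C mu.

Definition is_free1 (V : alg -> Prop) (S : alg) (eta : unit -> S) : Prop :=
  V S /\ forall (B : alg), V B -> forall b : unit -> B,
    exists h : S -> B, is_hom h /\ (forall u, h (eta u) = b u) /\
      forall h' : S -> B, is_hom h' -> (forall u, h' (eta u) = b u) ->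
        forall s, h' s = h s.

Section Sys.
Variable V : alg -> Prop.
Variable L : alg.

Record sys := Sys { spts : Type; salg : alg; skap : salg -> (spts -> L) }.
Arguments skap s _ _ : clear implicits.

Definition is_system (s : sys) : Prop :=
  V (salg s) /\ @is_hom (salg s) (pow_alg (spts s) L) (skap s).

Definition is_sys_morph (s1 s2 : sys) (f : spts s1 -> spts s2)
    (phi : salg s2 -> salg s1) : Prop :=
  is_hom phi /\ forall (a : salg s2) (x : spts s1), skap s1 (phi a) x = skap s2 a (f x).

Definition is_initial (s1 s2 : sys) (f : spts s1 -> spts s2)
    (phi : salg s2 -> salg s1) : Prop :=
  forall (s : sys), is_system s ->
    forall (g : spts s -> spts s1) (psi : salg s1 -> salg s), is_hom psi ->
      @is_sys_morph s s2 (fun y => f (g y)) (fun a => psi (phi a)) ->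
      @is_sys_morph s s1 g psi.

Definition is_embedding (s1 s2 : sys) (f : spts s1 -> spts s2)
    (phi : salg s2 -> salg s1) : Prop :=
  @is_sys_morph s1 s2 f phi /\ @is_initial s1 s2 f phi /\
  (forall x y, f x = f y -> x = y) /\ is_epi V phi.

Definition is_T0 (s : sys) : Prop :=
  forall x y : spts s, (forall a : salg s, skap s a x = skap s a y) -> x = y.

End Sys.
End UA.

Arguments Sys {Omega ar L} spts salg skap.

(* The i-th coordinate of a point of [S^I] is the value of the generator
   [mu I i (eta tt)] there, and the I-fold coproduct of [S] is free on these
   generators.  So a morphism into [S^I] is determined by what the algebra map
   does to the generators, and an injective point map forces T0.  Conversely,
   for a T0 system take [I = A], the point map [x |-> (a |-> kappa a x)]
   (injective by T0) and the counit [cop A -> A] sending the [a]-th generator to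
   [a]: it is onto, hence epi, and onto generators makes the morphism initial. *)
From Stdlib Require Import FunctionalExtensionality ClassicalEpsilon.

Section Algebra.
Context {Omega : Type} {ar : Omega -> Type} {V : alg ar -> Prop}.

Lemma is_hom_eval {A L : alg ar} {X : Type} {k : A -> X -> L} :
  @is_hom Omega ar A (pow_alg X L) k -> forall x, is_hom (fun a => k a x).
Proof. intros Hk x o xs. rewrite Hk. reflexivity. Qed.

Lemma is_hom_comp {A B C : alg ar} {f : A -> B} {g : B -> C} :
  is_hom f -> is_hom g -> is_hom (fun a => g (f a)).
Proof. intros Hf Hg o xs. rewrite Hf, Hg. reflexivity. Qed.

Lemma is_epi_of_surjective {A B : alg ar} {f : A -> B} :
  (forall b, exists a, f a = b) -> is_epi V f.
Proof. intros Hf C _ g h _ _ E b. destruct (Hf b) as [a <-]. apply E. Qed.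

Section Free1.
Context {S : alg ar} {eta : unit -> S} (HS : is_free1 V eta).

Lemma free1_hom_ext {B : alg ar} {h1 h2 : S -> B} : V B ->
  is_hom h1 -> is_hom h2 -> h1 (eta tt) = h2 (eta tt) -> forall s, h1 s = h2 s.
Proof.
  intros HB H1 H2 E s.
  destruct (proj2 HS B HB (fun _ => h2 (eta tt))) as [h [_ [_ Huniq]]].
  rewrite (Huniq h1 H1), (Huniq h2 H2); trivial; intros []; trivial.
Qed.

Lemma free1_lifts {B : alg ar} : V B ->
  exists G : B -> S -> B, forall b, is_hom (G b) /\ G b (eta tt) = b.
Proof.
  intro HB. apply (choice (fun b h => is_hom h /\ h (eta tt) = b)).
  intro b. destruct (proj2 HS B HB (fun _ => b)) as [h [Hh [Heta _]]].
  exists h. split; [exact Hh | apply Heta].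
Qed.
End Free1.

Lemma coproduct_hom_ext {I : Type} {F : I -> alg ar} {C : alg ar}
    {mu : forall i, F i -> C} {B : alg ar} {h1 h2 : C -> B} :
  is_coproduct V mu -> V B -> is_hom h1 -> is_hom h2 ->
  (forall i a, h1 (mu i a) = h2 (mu i a)) -> forall c, h1 c = h2 c.
Proof.
  intros [_ [Hmu Hcop]] HB H1 H2 E c.
  destruct (Hcop B HB (fun i a => h2 (mu i a))) as [h [_ [_ Huniq]]].
  - intro i. apply is_hom_comp; trivial.
  - rewrite (Huniq h1 H1 E), (Huniq h2 H2); trivial.
Qed.
End Algebra.

Section SierpinskiPower.
Context {Omega : Type} {ar : Omega -> Type} {V : alg ar -> Prop}.
Context {S : alg ar} {eta : unit -> S} {L : alg ar} {kS : S -> L -> L}.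
Context {cop : Type -> alg ar} {mu : forall I : Type, I -> S -> cop I}.
Context {theta : forall I : Type, cop I -> (I -> L) -> L}.
Context (HS : is_free1 V eta) (HL : V L).
Context (HkSeta : forall a : L, kS (eta tt) a = a).
Context (Hcopr : forall I : Type, is_coproduct V (mu I)).
Context (Htheta_hom : forall I : Type, is_hom (A := cop I) (B := pow_alg (I -> L) L) (theta I)).
Context (Htheta : forall I i s x, theta I (mu I i s) x = kS s (x i)).

Definition sierpinski_pow (I : Type) : sys L := Sys (I -> L) (cop I) (theta I).

Lemma theta_generator {I : Type} (i : I) (x : I -> L) : theta I (mu I i (eta tt)) x = x i.
Proof. rewrite Htheta. apply HkSeta. Qed.

Lemma coproduct_free1_hom_ext {I : Type} {B : alg ar} {h1 h2 : cop I -> B} :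
  V B -> is_hom h1 -> is_hom h2 ->
  (forall i, h1 (mu I i (eta tt)) = h2 (mu I i (eta tt))) -> forall c, h1 c = h2 c.
Proof.
  intros HB H1 H2 E.
  apply (coproduct_hom_ext (Hcopr I) HB H1 H2). intro i.
  destruct (Hcopr I) as [_ [Hmu _]].
  apply (free1_hom_ext HS); try apply is_hom_comp; trivial.
Qed.

Lemma is_sys_morph_to_pow {s : sys L} {I : Type} {f : spts s -> I -> L}
    {phi : cop I -> salg s} :
  is_system V s -> is_hom phi ->
  (forall i x, skap (s := s) (phi (mu I i (eta tt))) x = f x i) ->
  is_sys_morph (s1 := s) (s2 := sierpinski_pow I) f phi.
Proof.
  intros [_ Hkap] Hphi Hgen. split; [exact Hphi |]. intros c x.
  apply (coproduct_free1_hom_ext (h1 := fun c => skap (s := s) (phi c) x)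
                                 (h2 := fun c => theta I c (f x))); trivial.
  - exact (is_hom_comp Hphi (is_hom_eval Hkap x)).
  - exact (is_hom_eval (Htheta_hom I) (f x)).
  - intro i. simpl. rewrite Hgen, theta_generator. reflexivity.
Qed.

Lemma is_initial_to_pow {s : sys L} {I : Type} {f : spts s -> I -> L}
    {phi : cop I -> salg s} :
  is_sys_morph (s1 := s) (s2 := sierpinski_pow I) f phi ->
  (forall a, exists i, phi (mu I i (eta tt)) = a) ->
  is_initial V (s1 := s) (s2 := sierpinski_pow I) f phi.
Proof.
  intros [_ Hm] Hgen s' _ g psi Hpsi [_ Hm']. split; [exact Hpsi |].
  intros a y. destruct (Hgen a) as [i <-].
  rewrite Hm', Hm. reflexivity.
Qed.

Lemma is_T0_of_sys_morph_to_pow {s : sys L} {I : Type} {f : spts s -> I -> L}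
    {phi : cop I -> salg s} :
  is_sys_morph (s1 := s) (s2 := sierpinski_pow I) f phi ->
  (forall x y, f x = f y -> x = y) -> is_T0 s.
Proof.
  intros [_ Hm] Hinj x y E. apply Hinj. extensionality i.
  assert (Hcoord : forall z, f z i = skap (phi (mu I i (eta tt))) z).
  { intro z. rewrite Hm. symmetry. apply theta_generator. }
  rewrite !Hcoord. apply E.
Qed.

Lemma coproduct_counit_exists {A : alg ar} : V A ->
  exists phi : cop A -> A, is_hom phi /\ forall a, phi (mu A a (eta tt)) = a.
Proof.
  intro HA. destruct (free1_lifts HS HA) as [G HG].
  destruct (Hcopr A) as [_ [_ Hcop]].
  destruct (Hcop A HA G) as [phi [Hphi [Hphimu _]]]; [apply HG |].
  exists phi. split; [exact Hphi |]. intro a. rewrite Hphimu. apply HG.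
Qed.

Lemma embedding_of_T0 {s : sys L} : is_system V s -> is_T0 s ->
  exists phi, is_embedding V (s1 := s) (s2 := sierpinski_pow (salg s))
                           (fun x a => skap (s := s) a x) phi.
Proof.
  intros Hs HT0. destruct (coproduct_counit_exists (proj1 Hs)) as [phi [Hphi Hgen]].
  assert (Hmorph : is_sys_morph (s1 := s) (s2 := sierpinski_pow (salg s))
                                (fun x a => skap (s := s) a x) phi).
  { apply is_sys_morph_to_pow; trivial. intros a x. rewrite Hgen. reflexivity. }
  exists phi. split; [| split; [| split]].
  - exact Hmorph.
  - apply is_initial_to_pow; trivial. intro a. exists a. apply Hgen.
  - intros x y E. apply HT0. intro a. exact (equal_f E a).
  - apply is_epi_of_surjective. intro a. exists (mu _ a (eta tt)). apply Hgen.
Qed.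
End SierpinskiPower.

Theorem theorem2
  (Omega : Type) (ar : Omega -> Type)
  (V : alg ar -> Prop) (HV : is_variety V) (Hcop : has_coproducts V)
  (S : alg ar) (eta : unit -> S) (HS : @is_free1 Omega ar V S eta)
  (L : alg ar) (HL : V L)
  (kS : S -> (L -> L)) (HkS : @is_hom Omega ar S (pow_alg L L) kS)
  (HkSeta : forall a : L, kS (eta tt) a = a)
  (cop : Type -> alg ar) (mu : forall (I : Type), I -> S -> cop I)
  (Hcopr : forall I : Type,
      @is_coproduct Omega ar V I (fun _ : I => S) (cop I) (mu I))
  (theta : forall I : Type, cop I -> ((I -> L) -> L))
  (Htheta_hom : forall I : Type,
      @is_hom Omega ar (cop I) (pow_alg (I -> L) L) (theta I))
  (Htheta : forall (I : Type) (i : I) (s : S) (x : I -> L),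
      theta I (mu I i s) x = kS s (x i))
  (X : Type) (A : alg ar) (kappa : A -> (X -> L))
  (Hsys : @is_system Omega ar V L (Sys X A kappa)) :
  @is_T0 Omega ar L (Sys X A kappa) <->
  exists (I : Type) (f : X -> (I -> L)) (phi : cop I -> A),
    @is_embedding Omega ar V L (Sys X A kappa) (Sys (I -> L) (cop I) (theta I)) f phi.
Proof.
  split.
  - intro HT0.
    destruct (embedding_of_T0 HS HL HkSeta Hcopr Htheta_hom Htheta Hsys HT0) as [phi Hemb].
    exists A, (fun x a => kappa a x), phi. exact Hemb.
  - intros (I & f & phi & Hmorph & _ & Hinj & _).
    exact (is_T0_of_sys_morph_to_pow (kS := kS) HkSeta Htheta Hmorph Hinj).
Qed.
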